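(* Let $f\in\mathcal{B}^\Sigma_{d,n}$, $b\in\mathcal{B}^\Sigma_{d,m}$ and $a\in\mathcal{B}^\Sigma_{e,n+m}$, and write $\Delta(a)=\sum a^{(1)}\otimes a^{(2)}$. Then $a*(b\cdot f)=\sum (a^{(1)}*b)\cdot(a^{(2)}*f)$, i.e. $a*(b\cdot f)$ is the image of $\Delta(a)*(b\otimes f)\in\mathcal{B}^\Sigma\otimes\mathcal{B}^\Sigma$ under the multiplication map $u\otimes v\mapsto u\cdot v$.
   Context: Let $\mathbf{k}$ be a field of characteristic $0$ and $B=\bigoplus_{d\ge0}B_d$ a commutative graded $\mathbf{k}$-algebra with $B_0=\mathbf{k}$, generated by $B_1$, $\dim B_1<\infty$. $\mathcal{B}^\Sigma_{d,n}=(B_d^{\otimes n})^{\Sigma_n}$ ($\Sigma_n$ permuting factors), $\mathcal{B}^\Sigma=\bigoplus_{n,d}\mathcal{B}^\Sigma_{d,n}$. For $f\in\mathcal{B}^\Sigma_{d,n}$, $g\in\mathcal{B}^\Sigma_{d,m}$, $f\cdot g=\sum_\sigma f\cdot_\sigma g$ where $\sigma$ ranges over subsets $\{i_1<\cdots<i_n\}\subseteq[n+m]$ and $f\cdot_\sigma g$ places the factors of $f$ in positions $i_1,\dots,i_n$ and those of $g$ in the remaining positions in order; $\cdot$ is zero between different $d$. $*:\mathcal{B}^\Sigma_{d,n}\otimes\mathcal{B}^\Sigma_{e,n}\to\mathcal{B}^\Sigma_{d+e,n}$ is factorwise multiplication in $B$, zero for different $n$. $\Delta:\mathcal{B}^\Sigma\to\mathcal{B}^\Sigma\otimes\mathcal{B}^\Sigma$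 is the unique $\cdot$-algebra homomorphism with $\Delta(w)=1\otimes w+w\otimes1$ for $w\in B_d=\mathcal{B}^\Sigma_{d,1}$ (each $\bigoplus_n\mathcal{B}^\Sigma_{d,n}$ being a free divided power algebra on $B_d$). $*$ is extended componentwise to $\mathcal{B}^\Sigma\otimes\mathcal{B}^\Sigma$: $(a'\otimes a'')*(b\otimes f)=(a'*b)\otimes(a''*f)$. *)

From mathcomp Require Import all_boot all_order all_algebra fingroup perm.
Set Implicit Arguments.
Unset Strict Implicit.
Unset Printing Implicit Defensive.
Import GRing.Theory.
Local Open Scope ring_scope.

(* B is a commutative k-algebra; for each degree d, [bas d : 'I_(r d) -> B]  *)
(* is a basis of the homogeneous component B_d (so B_d is finite            *)
(* dimensional, dim B_d = r d), and [c d d' i j l] are the structure         *)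
(* constants: @bas d i * @bas d' j = \sum_l c d d' i j l *: bas (d+d') l.     *)

Section Graded.
Variables (k : fieldType) (B : comAlgType k) (r : nat -> nat)
          (bas : forall d : nat, 'I_(r d) -> B).

Inductive gen_by_B1 : B -> Prop :=
  | gen_one : gen_by_B1 1
  | gen_B1 (i : 'I_(r 1%N)) : gen_by_B1 (@bas 1%N i)
  | gen_add x y : gen_by_B1 x -> gen_by_B1 y -> gen_by_B1 (x + y)
  | gen_scale (a : k) x : gen_by_B1 x -> gen_by_B1 (a *: x)
  | gen_mul x y : gen_by_B1 x -> gen_by_B1 y -> gen_by_B1 (x * y).

Definition graded_algebra_gen_B1
  (c : forall d d', 'I_(r d) -> 'I_(r d') -> 'I_(r (d + d')%N) -> k) : Prop :=
  (forall (D : nat) (l : forall d : nat, 'I_(r d) -> k),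
      \sum_(d < D) \sum_(i < r d) l d i *: @bas d i = 0 ->
      forall (d : 'I_D) (i : 'I_(r d)), l d i = 0) /\
  (forall x : B, exists (D : nat) (l : forall d : nat, 'I_(r d) -> k),
      x = \sum_(d < D) \sum_(i < r d) l d i *: @bas d i) /\
  (forall d d' (i : 'I_(r d)) (j : 'I_(r d')),
      @bas d i * @bas d' j = \sum_(l < r (d + d')%N) c d d' i j l *: @bas (d + d')%N l) /\
  r 0 = 1%N /\
  (exists l : 'I_(r 0) -> k, 1 = \sum_(i < r 0) l i *: @bas 0 i) /\
  (forall x : B, gen_by_B1 x).

End Graded.

(* Tensor powers.  An element of B_d^{(x)n} is given by its coordinates in   *)
(* the basis bas d (i_1) (x) ... (x) bas d (i_n): tens r d n.                *)
(* An element of B_d^{(x)p} (x) B_d^{(x)q} is given by its coordinates:       *)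
(* tens2 r d p q.                                                            *)

Notation tens k r d n := {ffun {ffun 'I_n -> 'I_(r d)} -> k}.
Notation tens2 k r d p q :=
  {ffun {ffun 'I_p -> 'I_(r d)} * {ffun 'I_q -> 'I_(r d)} -> k}.

Section Tensors.
Variables (k : fieldType) (r : nat -> nat).


Definition sym d n (x : tens k r d n) : Prop :=
  forall (s : 'S_n) (I : {ffun 'I_n -> 'I_(r d)}), x [ffun j => I (s j)] = x I.

(* unit of (+)_n B^Sigma_{d,n}: 1 in B_d^{(x)0} = k *)
Definition tens_one d : tens k r d 0 := [ffun _ => 1].

Definition tdelta d n (I : {ffun 'I_n -> 'I_(r d)}) : tens k r d n :=
  [ffun J : {ffun 'I_n -> 'I_(r d)} => (J == I)%:R].

Definition shuffle n m N (p : {ffun 'I_n -> 'I_N}) (q : {ffun 'I_m -> 'I_N}) :=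
  [&& [forall i : 'I_n, forall j : 'I_n, (i < j)%N ==> (p i < p j)%N],
      [forall i : 'I_m, forall j : 'I_m, (i < j)%N ==> (q i < q j)%N] &
      [forall x : 'I_N, (x \in codom p) != (x \in codom q)]].

(* sum over shuffles sigma of f ._sigma g, with output length N
   (zero unless N = n + m) *)
Definition shufprod d n m N (f : tens k r d n) (g : tens k r d m) : tens k r d N :=
  [ffun I : {ffun 'I_N -> 'I_(r d)} => \sum_(p : {ffun 'I_n -> 'I_N})
              \sum_(q : {ffun 'I_m -> 'I_N} | shuffle p q)
                f [ffun j => I (p j)] * g [ffun j => I (q j)]].

Definition dot d n m (f : tens k r d n) (g : tens k r d m) : tens k r d (n + m) :=
  shufprod (n + m) f g.

(* the product on B^Sigma (x) B^Sigma : (x1 (x) x2)(y1 (x) y2) = x1.y1 (x) x2.y2,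
   on the components (p1,q1), (p2,q2) -> (p,q) *)
Definition dot2 d p1 q1 p2 q2 p q (X : tens2 k r d p1 q1) (Y : tens2 k r d p2 q2)
  : tens2 k r d p q :=
  [ffun IJ : {ffun 'I_p -> 'I_(r d)} * {ffun 'I_q -> 'I_(r d)} => \sum_(s1 : {ffun 'I_p1 -> 'I_p})
              \sum_(s2 : {ffun 'I_p2 -> 'I_p} | shuffle s1 s2)
              \sum_(t1 : {ffun 'I_q1 -> 'I_q})
              \sum_(t2 : {ffun 'I_q2 -> 'I_q} | shuffle t1 t2)
                X ([ffun j => IJ.1 (s1 j)], [ffun j => IJ.2 (t1 j)]) *
                Y ([ffun j => IJ.1 (s2 j)], [ffun j => IJ.2 (t2 j)])].

Variable c : forall d d', 'I_(r d) -> 'I_(r d') -> 'I_(r (d + d')%N) -> k.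

Definition star d d' n (a : tens k r d n) (b : tens k r d' n) : tens k r (d + d')%N n :=
  [ffun L : {ffun 'I_n -> 'I_(r (d + d')%N)} => \sum_(I : {ffun 'I_n -> 'I_(r d)}) \sum_(J : {ffun 'I_n -> 'I_(r d')})
     a I * b J * \prod_(j < n) c (I j) (J j) (L j)].

(* The map  u (x) v |-> (u * b) . (v * f)  applied to an element of
   B_e^{(x)m} (x) B_e^{(x)n}, extended linearly. *)
Definition mu e d m n (b : tens k r d m) (f : tens k r d n) (X : tens2 k r e m n)
  : tens k r (e + d) (m + n) :=
  [ffun L : {ffun 'I_(m + n) -> 'I_(r (e + d))} =>
    \sum_(IJ : {ffun 'I_m -> 'I_(r e)} * {ffun 'I_n -> 'I_(r e)})
      X IJ * dot (star (tdelta IJ.1) b) (star (tdelta IJ.2) f) L].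

(* Delta on (+)_N B^Sigma_{e,N}, given by its components
   Delta N p q : B^Sigma_{e,N} -> B^Sigma_{e,p} (x) B^Sigma_{e,q}:
   a (linear, unital) .-algebra homomorphism with
   Delta(w) = 1 (x) w + w (x) 1 for w in B_e = B^Sigma_{e,1}. *)
Definition is_Delta e (Delta : forall N p q : nat, tens k r e N -> tens2 k r e p q) : Prop :=
  (forall N p q (a : k) (x y : tens k r e N), sym x -> sym y ->
      Delta N p q [ffun I => a * x I + y I] =
      [ffun IJ => a * Delta N p q x IJ + Delta N p q y IJ]) /\
  (forall N1 N2 (x : tens k r e N1) (y : tens k r e N2) p q, sym x -> sym y ->
      Delta (N1 + N2)%N p q (dot x y) =
      \sum_(p1 < p.+1) \sum_(q1 < q.+1)
         dot2 p q (Delta N1 p1 q1 x) (Delta N2 (p - p1)%N (q - q1)%N y)) /\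
  Delta 0 0 0 (tens_one e) = [ffun _ => 1] /\
  (forall p q, (p, q) != (0%N, 0%N) -> Delta 0 p q (tens_one e) = 0) /\
  (forall w : tens k r e 1,
      [/\ Delta 1 0 1 w = [ffun IJ => w IJ.2],
          Delta 1 1 0 w = [ffun IJ => w IJ.1] &
          forall p q, (p, q) != (0%N, 1%N) -> (p, q) != (1%N, 0%N) ->
            Delta 1 p q w = 0]).

End Tensors.

(* Over a field of characteristic 0 the axioms of [is_Delta] force Delta to be
   deconcatenation on symmetric tensors: Delta x (K1, K2) = x (K1 ++ K2) when
   p + q = N, and 0 otherwise.  This goes by induction on N, from the identity
   (1 + N) x = \sum_i e_i . slice x i, where [slice x i] fixes the first tensor
   factor of x to the basis vector e_i: multiplicativity expresses Delta x through
   Delta e_i = 1 (x) e_i + e_i (x) 1 and Delta (slice x i), and 1 + N is invertible.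
   Once Delta a is a deconcatenation, both sides of the lemma are, coordinatewise,
   sums over the shuffles (s, t) of m + n positions; for a fixed shuffle the two
   terms agree after renumbering the positions by the permutation sending the
   first m positions along s and the last n along t, which fixes a because a is
   symmetric. *)

From mathcomp Require Import all_boot all_order all_algebra fingroup perm.
From mathcomp Require Import zify.
Set Implicit Arguments.
Unset Strict Implicit.
Unset Printing Implicit Defensive.
Import GRing.Theory.
Local Open Scope ring_scope.

Section FinFunctions.
Variable T : Type.

Definition ffcat p q (K1 : {ffun 'I_p -> T}) (K2 : {ffun 'I_q -> T}) : {ffun 'I_(p + q) -> T} :=
  [ffun j => match split j with inl i => K1 i | inr i => K2 i end].

Definition castf M N (E : M = N) (F : {ffun 'I_M -> T}) : {ffun 'I_N -> T} :=
  [ffun j => F (cast_ord (esym E) j)].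

Lemma ffcat_lshift p q (K1 : {ffun 'I_p -> T}) (K2 : {ffun 'I_q -> T}) i :
  ffcat K1 K2 (lshift q i) = K1 i.
Proof. by rewrite ffunE (unsplitK (inl i)). Qed.

Lemma ffcat_rshift p q (K1 : {ffun 'I_p -> T}) (K2 : {ffun 'I_q -> T}) i :
  ffcat K1 K2 (rshift p i) = K2 i.
Proof. by rewrite ffunE (unsplitK (inr i)). Qed.

Lemma ffcat_split p q (I : {ffun 'I_(p + q) -> T}) :
  ffcat [ffun j => I (lshift q j)] [ffun j => I (rshift p j)] = I.
Proof. by apply/ffunP => x; rewrite ffunE; case: (split_ordP x) => y -> /=; rewrite ffunE. Qed.

End FinFunctions.

Lemma codom_comp (T : Type) n N (K : {ffun 'I_N -> T}) (s : {ffun 'I_n -> 'I_N}) :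
  codom [ffun j => K (s j)] = map K (codom s).
Proof. by rewrite (codomE s) -map_comp codomE; apply: eq_map => j; rewrite /= ffunE. Qed.

Lemma codom_ord0 (T : Type) (F : {ffun 'I_0 -> T}) : codom F = [::].
Proof. by rewrite codomE enum_ord0. Qed.

Lemma codom_ord1 (T : Type) (F : {ffun 'I_1 -> T}) : codom F = [:: F ord0].
Proof. by rewrite codomE enum_ordSl enum_ord0. Qed.

Lemma ffun_ord0_eq (T : Type) (F G : {ffun 'I_0 -> T}) : F = G.
Proof. by apply/ffunP => -[]. Qed.

Lemma castf_id (T : Type) N (F : {ffun 'I_N -> T}) : castf (erefl N) F = F.
Proof. by apply/ffunP => j; rewrite ffunE cast_ord_id. Qed.

Lemma perm_codom_castf (T : eqType) M N (E : M = N) (F : {ffun 'I_M -> T}) :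
  perm_eq (codom (castf E F)) (codom F).
Proof. by case: N / E; rewrite castf_id. Qed.

Lemma perm_codom_perm (T : eqType) N (s : 'S_N) (J : {ffun 'I_N -> T}) :
  perm_eq (codom [ffun j => J (s j)]) (codom J).
Proof.
have -> : codom [ffun j => J (s j)] = map J (map s (enum 'I_N)).
  by rewrite codomE -(map_comp J s); apply: eq_map => j; rewrite /= ffunE.
rewrite (codomE J); apply: perm_map; apply: uniq_perm.
- by rewrite map_inj_uniq ?enum_uniq //; exact: perm_inj.
- exact: enum_uniq.
- by move=> x; rewrite mem_enum; apply/mapP; exists (s^-1 x)%g; rewrite ?mem_enum ?permKV.
Qed.

(** * Shuffles *)

Section Shuffles.

Definition increasing n N (s : {ffun 'I_n -> 'I_N}) :=
  [forall i : 'I_n, forall j : 'I_n, (i < j)%N ==> (s i < s j)%N].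

Lemma increasingP n N (s : {ffun 'I_n -> 'I_N}) :
  increasing s -> {homo s : i j / (i < j)%N}.
Proof. by move=> /forallP H i j; move: (H i) => /forallP /(_ j) /implyP. Qed.

Lemma increasing_inj n N (s : {ffun 'I_n -> 'I_N}) : increasing s -> injective s.
Proof.
move=> /increasingP Hs i j eij; apply/val_inj/eqP.
by case: ltngtP => // /Hs; rewrite eij ltnn.
Qed.

Lemma increasing_sorted n N (s : {ffun 'I_n -> 'I_N}) :
  increasing s -> sorted (fun x y : 'I_N => (x < y)%N) (codom s).
Proof.
move=> /increasingP Hs; rewrite codomE.
apply: (homo_sorted Hs).
by have := iota_ltn_sorted 0 n; rewrite -val_enum_ord sorted_map.
Qed.

Variables (n m N : nat) (s : {ffun 'I_n -> 'I_N}) (t : {ffun 'I_m -> 'I_N}).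
Hypothesis st : shuffle s t.

Lemma shuffle_increasing : increasing s /\ increasing t.
Proof. by case/and3P: st. Qed.

Lemma mem_codom_shuffle x : (x \in codom t) = (x \notin codom s).
Proof. by case/and3P: st => _ _ /forallP /(_ x); case: (x \in codom s); case: (_ \in _). Qed.

Lemma perm_enum_shuffle : perm_eq (enum 'I_N) (codom s ++ codom t).
Proof.
have [incr_s incr_t] := shuffle_increasing.
apply: uniq_perm; first exact: enum_uniq.
- rewrite cat_uniq; apply/and3P; split.
  + by rewrite codomE map_inj_uniq ?enum_uniq //; exact: increasing_inj.
  + by apply/hasPn => x; rewrite /= mem_codom_shuffle.
  + by rewrite codomE map_inj_uniq ?enum_uniq //; exact: increasing_inj.
- by move=> x; rewrite mem_enum mem_cat mem_codom_shuffle orbN.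
Qed.

Lemma perm_codom_shuffle (T : eqType) (K : {ffun 'I_N -> T}) :
  perm_eq (codom K) (codom [ffun j => K (s j)] ++ codom [ffun j => K (t j)]).
Proof. by rewrite !codom_comp -map_cat codomE perm_map // perm_enum_shuffle. Qed.

End Shuffles.

Lemma shuffle_compl_uniq n m N (s : {ffun 'I_n -> 'I_N}) (t t' : {ffun 'I_m -> 'I_N}) :
  shuffle s t -> shuffle s t' -> t' = t.
Proof.
move=> st st'; have [_ incr_t] := shuffle_increasing st.
have [_ incr_t'] := shuffle_increasing st'.
have eq_codom : codom t' = codom t.
  apply: (irr_sorted_eq (leT := fun x y : 'I_N => (x < y)%N)).
  - by move=> x y z; apply: ltn_trans.
  - by move=> x; rewrite /= ltnn.
  - exact: increasing_sorted.
  - exact: increasing_sorted.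
  - by move=> x; rewrite (mem_codom_shuffle st) (mem_codom_shuffle st').
apply/ffunP => j; move: eq_codom; rewrite !codomE => /eq_in_map; apply.
by rewrite mem_enum.
Qed.

Lemma shuffle_lrshift p q : shuffle [ffun j : 'I_p => lshift q j] [ffun j : 'I_q => rshift p j].
Proof.
apply/and3P; split.
- by apply/forallP => i; apply/forallP => j; rewrite !ffunE; apply/implyP.
- by apply/forallP => i; apply/forallP => j; rewrite !ffunE /= ltn_add2l; apply/implyP.
- apply/forallP => x; case: (split_ordP x) => y ->.
  + have -> : lshift q y \in codom [ffun j => lshift q j].
      by apply/codomP; exists y; rewrite ffunE.
    suff -> : (lshift q y \in codom [ffun j => rshift p j]) = false by [].
    by apply/negbTE/negP => /codomP [z]; rewrite ffunE => /eqP; rewrite eq_lrshift.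
  + have -> : rshift p y \in codom [ffun j => rshift p j].
      by apply/codomP; exists y; rewrite ffunE.
    suff -> : (rshift p y \in codom [ffun j => lshift q j]) = false by [].
    by apply/negbTE/negP => /codomP [z]; rewrite ffunE => /eqP; rewrite eq_rlshift.
Qed.

Lemma perm_codom_ffcat (T : eqType) p q (K1 : {ffun 'I_p -> T}) (K2 : {ffun 'I_q -> T}) :
  perm_eq (codom (ffcat K1 K2)) (codom K1 ++ codom K2).
Proof.
have := perm_codom_shuffle (shuffle_lrshift p q) (ffcat K1 K2).
suff [-> ->] : [ffun j => ffcat K1 K2 ([ffun j => lshift q j] j)] = K1 /\
               [ffun j => ffcat K1 K2 ([ffun j => rshift p j] j)] = K2 by [].
by split; apply/ffunP => j; rewrite ffunE (ffunE (fun j => _ j)) ?ffcat_lshift ?ffcat_rshift.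
Qed.

Lemma shuffle_lift N (s : {ffun 'I_1 -> 'I_N.+1}) : shuffle s [ffun j => lift (s ord0) j].
Proof.
have mem_s x : (x \in codom s) = (x == s ord0).
  by apply/codomP/eqP => [[z ->]|->]; [rewrite (ord1 z) | exists ord0].
apply/and3P; split.
- by apply/forallP => i; apply/forallP => j; rewrite (ord1 i) (ord1 j).
- apply/forallP => i; apply/forallP => j; rewrite !ffunE /= /bump; apply/implyP => lij.
  by case: (leqP (s ord0) i); case: (leqP (s ord0) j) => /= h1 h2; lia.
- apply/forallP => x; rewrite mem_s; case: (unliftP (s ord0) x) => [j ->|->].
  + rewrite lift_eqF; suff -> : lift (s ord0) j \in codom [ffun j => lift (s ord0) j] by [].
    by apply/codomP; exists j; rewrite ffunE.
  + rewrite eqxx; suff -> : (s ord0 \in codom [ffun j => lift (s ord0) j]) = false by [].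
    by apply/negbTE/negP => /codomP [z]; rewrite ffunE => /eqP; rewrite eq_liftF.
Qed.

Lemma shuffle_castf n m m' N (s : {ffun 'I_n -> 'I_N}) (t : {ffun 'I_m -> 'I_N}) (E : m = m') :
  shuffle s t -> shuffle s (castf E t).
Proof. by case: m' / E; rewrite castf_id. Qed.

Lemma shuffle_ord0 N (s : {ffun 'I_0 -> 'I_N}) : shuffle s [ffun j => j].
Proof.
apply/and3P; split; first by apply/forallP => -[].
- by apply/forallP => i; apply/forallP => j; rewrite !ffunE; apply/implyP.
- apply/forallP => x; rewrite codom_ord0.
  suff -> : x \in codom [ffun j : 'I_N => j] by [].
  by apply/codomP; exists x; rewrite ffunE.
Qed.

Lemma shuffle_compl_exists a p (s : {ffun 'I_a -> 'I_p}) :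
  (a <= 1)%N -> exists t : {ffun 'I_(p - a) -> 'I_p}, shuffle s t.
Proof.
case: a s => [|[|//]] s _.
  by exists (castf (esym (subn0 p)) [ffun j => j]); apply/shuffle_castf/shuffle_ord0.
case: p s => [s|p s]; first by case: (s ord0).
by exists (castf (esym (subn1 p.+1)) [ffun j => lift (s ord0) j]); apply/shuffle_castf/shuffle_lift.
Qed.

Lemma sum_shuffle_const (V : nmodType) n m N (s : {ffun 'I_n -> 'I_N}) (v : V) :
  (exists t : {ffun 'I_m -> 'I_N}, shuffle s t) ->
  \sum_(t : {ffun 'I_m -> 'I_N} | shuffle s t) v = v.
Proof.
case=> t0 st0; rewrite (big_pred1 t0) // => t /=.
by apply/idP/eqP => [st|->//]; exact: shuffle_compl_uniq st0 st.
Qed.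

Lemma sum_shuffle_small (V : nmodType) a p (v : V) : (a <= 1)%N ->
  \sum_(s : {ffun 'I_a -> 'I_p}) \sum_(t : {ffun 'I_(p - a) -> 'I_p} | shuffle s t) v = v *+ p ^ a.
Proof.
move=> a_le1; rewrite (eq_bigr (fun=> v)) => [|s _].
  by rewrite sumr_const card_ffun !card_ord.
exact/sum_shuffle_const/shuffle_compl_exists.
Qed.

Lemma perm_codom_shuffle2 (T : eqType) p1 p2 p q1 q2 q
    (s1 : {ffun 'I_p1 -> 'I_p}) (s2 : {ffun 'I_p2 -> 'I_p})
    (t1 : {ffun 'I_q1 -> 'I_q}) (t2 : {ffun 'I_q2 -> 'I_q})
    (K1 : {ffun 'I_p -> T}) (K2 : {ffun 'I_q -> T}) :
  shuffle s1 s2 -> shuffle t1 t2 ->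
  perm_eq (codom K1 ++ codom K2)
    ((codom [ffun j => K1 (s1 j)] ++ codom [ffun j => K2 (t1 j)]) ++
     (codom [ffun j => K1 (s2 j)] ++ codom [ffun j => K2 (t2 j)])).
Proof.
move=> st1 st2; rewrite (permPl (perm_cat (perm_codom_shuffle st1 K1) (perm_codom_shuffle st2 K2))).
by rewrite -!catA perm_cat2l perm_catCA.
Qed.

Lemma ffcat_shuffle_inj n m (s : {ffun 'I_n -> 'I_(n + m)}) (t : {ffun 'I_m -> 'I_(n + m)}) :
  shuffle s t -> injective (ffcat s t).
Proof.
move=> st; apply/injectiveP; rewrite /injectiveb /dinjectiveb -codomE.
by rewrite (perm_uniq (perm_codom_ffcat s t)) -(perm_uniq (perm_enum_shuffle st)) enum_uniq.
Qed.

Lemma perm_codom_lift (T : eqType) N (G : {ffun 'I_N.+1 -> T}) (u : 'I_N.+1) :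
  perm_eq (codom G) (G u :: codom [ffun j => G (lift u j)]).
Proof.
have := perm_codom_shuffle (shuffle_lift [ffun=> u]) G.
by rewrite codom_ord1 !ffunE; under eq_ffun do rewrite ffunE.
Qed.

Lemma sum_eq_ffun1 (R : pzSemiRingType) (T : finType) (J : {ffun 'I_1 -> T})
    (g : {ffun 'I_1 -> T} -> R) :
  \sum_(i : T) (J == [ffun=> i])%:R * g [ffun=> i] = g J.
Proof.
have JE : J = [ffun=> J ord0] by apply/ffunP => i; rewrite ffunE (ord1 i).
rewrite (bigD1 (J ord0)) //= big1 ?addr0 -?JE ?eqxx ?mul1r // => i neq_i.
suff /negbTE-> : J != [ffun=> i] by rewrite mul0r.
by apply: contra neq_i; rewrite {1}JE => /eqP/ffunP/(_ ord0); rewrite !ffunE => ->.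
Qed.

(** * Symmetric tensors *)

Section SymmetricTensors.
Variables (k : fieldType) (r : nat -> nat) (d : nat).

Lemma sym_perm n (x : tens k r d n) (F G : {ffun 'I_n -> 'I_(r d)}) :
  sym x -> perm_eq (codom F) (codom G) -> x F = x G.
Proof.
move=> sym_x; have -> : codom G = [tuple G i | i < n] :> seq _.
  by rewrite -[RHS]map_tnth_enum codomE; apply: eq_map => i; rewrite tnth_mktuple.
case/tuple_permP => s FE; rewrite -(sym_x s G); congr (x _); apply/ffunP => i.
move: FE; rewrite codomE /= => /eq_in_map/(_ i (mem_enum _ i)).
by rewrite /= tnth_mktuple ffunE.
Qed.

Lemma sym_ord1 (x : tens k r d 1) : sym x.
Proof.
by move=> s I; congr (x _); apply/ffunP => j; rewrite ffunE (ord1 j) (ord1 (s ord0)).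
Qed.

Lemma sym0 n : sym (0 : tens k r d n).
Proof. by move=> s I; rewrite !ffunE. Qed.

Lemma sym_sum n (A : Type) (l : seq A) (z : A -> tens k r d n) :
  (forall i, sym (z i)) -> sym (\sum_(i <- l) z i).
Proof. by move=> sym_z s I; rewrite !sum_ffunE; apply: eq_bigr => i _; rewrite sym_z. Qed.

Definition slice N (x : tens k r d (1 + N)) (i : 'I_(r d)) : tens k r d N :=
  [ffun J => x (ffcat [ffun=> i] J)].

Lemma sym_slice N (x : tens k r d (1 + N)) i : sym x -> sym (slice x i).
Proof.
move=> sym_x s J; rewrite !ffunE; apply: sym_perm => //.
rewrite (permPl (perm_codom_ffcat _ _)) (permPr (perm_codom_ffcat _ _)) perm_cat2l.
exact: perm_codom_perm.
Qed.

Lemma dot1E N (w : tens k r d 1) (y : tens k r d N) I :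
  dot w y I = \sum_(u : 'I_(1 + N)) w [ffun=> I u] * y [ffun j => I (lift u j)].
Proof.
rewrite ffunE (reindex (fun u : 'I_(1 + N) => [ffun=> u])) /=; last first.
  exists (fun s : {ffun 'I_1 -> 'I_(1 + N)} => s ord0) => [u _|s _]; first by rewrite ffunE.
  by apply/ffunP => i; rewrite ffunE (ord1 i).
apply: eq_bigr => u _; have st := shuffle_lift [ffun _ : 'I_1 => u].
rewrite (big_pred1 [ffun j => lift ([ffun _ : 'I_1 => u] ord0) j]) => [|t /=]; last first.
  by apply/idP/eqP => [st'|->]; [apply: shuffle_compl_uniq st st' | ].
by congr (_ * _); congr (_ _); apply/ffunP => i; rewrite !ffunE.
Qed.

Lemma sym_dot1 N (w : tens k r d 1) (y : tens k r d N) : sym y -> sym (dot w y).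
Proof.
move=> sym_y s I; rewrite !dot1E [RHS](reindex_inj (@perm_inj _ s)).
apply: eq_bigr => u _; congr (_ * _); first by congr (w _); apply/ffunP => i; rewrite !ffunE.
apply: sym_perm => //; set G := [ffun j => I (s j)].
have := perm_trans (perm_codom_perm s I) (perm_codom_lift I (s u)).
by rewrite (permPl (perm_codom_lift G u)) ffunE perm_cons.
Qed.

Lemma sum_dot_slice N (x : tens k r d (1 + N)) : sym x ->
  \sum_(i : 'I_(r d)) dot (tdelta k [ffun=> i]) (slice x i) = x *+ (1 + N).
Proof.
move=> sym_x; apply/ffunP => I; rewrite sum_ffunE ffunMnE.
under eq_bigr => i _ do rewrite dot1E.
rewrite exchange_big /= -[X in _ *+ X](card_ord (1 + N)) -sumr_const; apply: eq_bigr => u _.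
under eq_bigr => i _ do rewrite !ffunE.
rewrite (sum_eq_ffun1 [ffun=> I u] (fun G => x (ffcat G [ffun j => I (lift u j)]))).
apply: sym_perm => //; rewrite (permPl (perm_codom_ffcat _ _)) codom_ord1 ffunE perm_sym.
exact: perm_codom_lift.
Qed.

End SymmetricTensors.

Lemma natmul_inj (k : fieldType) n :
  [pchar k] =i pred0 -> n != 0%N -> injective (fun x : k => x *+ n).
Proof.
move=> char0 n_neq0; have nR_neq0 : n%:R != 0 :> k by have -> := (pcharf0P k).1 char0 n.
by move=> x y /= E; apply: (mulfI nR_neq0); rewrite !mulr_natl.
Qed.

Lemma dot2_0l (k : fieldType) r d p1 q1 p2 q2 p q (Y : tens2 k r d p2 q2) :
  dot2 p q (0 : tens2 k r d p1 q1) Y = 0.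
Proof. by apply/ffunP => KK; rewrite !ffunE; do 4!(apply: big1 => ? _); rewrite ffunE mul0r. Qed.

Lemma dot2_0r (k : fieldType) r d p1 q1 p2 q2 p q (X : tens2 k r d p1 q1) :
  dot2 p q X (0 : tens2 k r d p2 q2) = 0.
Proof. by apply/ffunP => KK; rewrite !ffunE; do 4!(apply: big1 => ? _); rewrite ffunE mulr0. Qed.

Lemma sum_pairs_deg1 (V : nmodType) (G : nat -> nat -> V) p q :
  (forall p1 q1, (p1 + q1 != 1)%N -> G p1 q1 = 0) ->
  \sum_(p1 < p.+1) \sum_(q1 < q.+1) G p1 q1 =
  (if (0 < q)%N then G 0%N 1%N else 0) + (if (0 < p)%N then G 1%N 0%N else 0).
Proof.
move=> G0; rewrite big_ord_recl big_ord_recl G0 // add0r; congr (_ + _).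
  by case: q => [|q]; rewrite ?big_ord0 // big_ord_recl big1 ?addr0 // => i _; apply: G0.
case: p => [|p]; first by rewrite big_ord0.
rewrite big_ord_recl big_ord_recl [X in _ + X]big1 => [|i _]; last by rewrite big1 // => j _; apply: G0.
by rewrite big1 ?addr0 // => j _; apply: G0.
Qed.

(** * The coproduct of a symmetric tensor *)

Section Deconcatenation.
Variables (k : fieldType) (r : nat -> nat) (e : nat)
  (Delta : forall N p q : nat, tens k r e N -> tens2 k r e p q).
Arguments Delta : clear implicits.
Hypothesis DeltaP : is_Delta Delta.

Lemma DeltaD N p q (x y : tens k r e N) :
  sym x -> sym y -> Delta N p q (x + y) = Delta N p q x + Delta N p q y.
Proof.
case: DeltaP => lin _ sym_x sym_y; have := lin N p q 1 x y sym_x sym_y.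
have -> : [ffun I => 1 * x I + y I] = x + y by apply/ffunP => I; rewrite !ffunE mul1r.
by move=> ->; apply/ffunP => IJ; rewrite !ffunE mul1r.
Qed.

Lemma Delta0 N p q : Delta N p q 0 = 0.
Proof.
have := @DeltaD N p q 0 0 (@sym0 k r e N) (@sym0 k r e N).
by rewrite addr0 => /(congr1 (fun z => z - Delta N p q 0)); rewrite subrr addrK.
Qed.

Lemma Delta_sum N p q (A : Type) (l : seq A) (z : A -> tens k r e N) :
  (forall i, sym (z i)) -> Delta N p q (\sum_(i <- l) z i) = \sum_(i <- l) Delta N p q (z i).
Proof.
move=> sym_z; elim: l => [|i l IHl]; first by rewrite !big_nil Delta0.
by rewrite !big_cons DeltaD ?IHl //; apply: sym_sum.
Qed.

Lemma DeltaMn N p q (x : tens k r e N) n : sym x -> Delta N p q (x *+ n) = Delta N p q x *+ n.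
Proof. by move=> sym_x; rewrite -(card_ord n) -!sumr_const Delta_sum. Qed.

Definition deconcatenating N := forall x : tens k r e N, sym x ->
  (forall p q (E : (p + q)%N = N) K1 K2, Delta N p q x (K1, K2) = x (castf E (ffcat K1 K2))) /\
  (forall p q, (p + q != N)%N -> Delta N p q x = 0).

Lemma deconcatenating0 : deconcatenating 0.
Proof.
move=> x _; case: DeltaP => lin [_ [Delta_one [Delta_one0 _]]].
pose F0 : {ffun 'I_0 -> 'I_(r e)} := ffun0 (card_ord 0).
have xE : x = [ffun I => x F0 * tens_one k r e I + (0 : tens k r e 0) I].
  by apply/ffunP => I; rewrite !ffunE mulr1 addr0 (ffun_ord0_eq I F0).
have sym_one : sym (tens_one k r e) by move=> s I; rewrite !ffunE.
rewrite xE; split => [[|//] [|//] E K1 K2 | p q pq_neq0].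
  by rewrite lin ?Delta0 ?Delta_one ?ffunE ?mulr1 ?addr0 //; apply: sym0.
rewrite lin; [|done|exact: sym0].
rewrite Delta0 Delta_one0; last by apply: contraNneq pq_neq0 => -[-> ->].
by apply/ffunP => IJ; rewrite !ffunE mulr0 addr0.
Qed.

Lemma deconcatenating1 : deconcatenating 1.
Proof.
move=> x _; case: DeltaP => _ [_ [_ [_ /(_ x) [Delta01 Delta10 Delta_other]]]].
split => [p q E K1 K2|p q pq_neq1]; last first.
  by apply: Delta_other; apply: contraNneq pq_neq1 => -[-> ->].
case: p q E K1 K2 => [|[|//]] [|[|//]] // E K1 K2;
  rewrite ?Delta01 ?Delta10 ffunE /=; apply: sym_perm (sym_ord1 x) _;
  by rewrite perm_sym (permPl (perm_codom_castf _ _)) (permPl (perm_codom_ffcat _ _))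
             ?codom_ord0 ?cats0.
Qed.

Definition slice_coproduct N p q p1 q1 (x : tens k r e (1 + N)) : tens2 k r e p q :=
  \sum_(i : 'I_(r e))
    dot2 p q (Delta 1 p1 q1 (tdelta k [ffun=> i])) (Delta N (p - p1) (q - q1) (slice x i)).

Lemma DeltaMn_slice N p q (x : tens k r e (1 + N)) : sym x ->
  Delta (1 + N) p q x *+ (1 + N) =
  \sum_(p1 < p.+1) \sum_(q1 < q.+1) slice_coproduct p q p1 q1 x.
Proof.
case: DeltaP => _ [mult _] sym_x.
rewrite -DeltaMn // -sum_dot_slice // Delta_sum => [|i]; last exact/sym_dot1/sym_slice.
under eq_bigr => i _ do rewrite (mult _ _ _ _ _ _ (sym_ord1 _) (sym_slice i sym_x)).
rewrite exchange_big; apply: eq_bigr => p1 _.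
by rewrite exchange_big; apply: eq_bigr => q1 _.
Qed.

Section InductiveStep.
Variable N : nat.
Hypothesis IH : deconcatenating N.

Lemma slice_coproductE p1 q1 p q (x : tens k r e (1 + N)) (E1 : (p1 + q1)%N = 1)
    (E : (p + q)%N = (1 + N)%N) K1 K2 :
  sym x -> (p1 <= p)%N -> (q1 <= q)%N ->
  slice_coproduct p q p1 q1 x (K1, K2) = x (castf E (ffcat K1 K2)) *+ (p ^ p1 * q ^ q1).
Proof.
(* By symmetry of x every pair of shuffles contributes v; as p1, q1 <= 1 there
   are p ^ p1 * q ^ q1 of them. *)
move=> sym_x le_p1 le_q1; set v := x _.
have E' : (p - p1 + (q - q1))%N = N by lia.
have [p1_le1 q1_le1] : (p1 <= 1)%N /\ (q1 <= 1)%N by lia.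
transitivity (\sum_(s1 : {ffun 'I_p1 -> 'I_p})
              \sum_(s2 : {ffun 'I_(p - p1) -> 'I_p} | shuffle s1 s2)
              \sum_(t1 : {ffun 'I_q1 -> 'I_q})
              \sum_(t2 : {ffun 'I_(q - q1) -> 'I_q} | shuffle t1 t2) v); last first.
  under eq_bigr => s1 _ do under eq_bigr => s2 _ do rewrite sum_shuffle_small //.
  by rewrite sum_shuffle_small // -mulrnA mulnC.
rewrite sum_ffunE; under eq_bigr do rewrite ffunE.
rewrite exchange_big; apply: eq_bigr => s1 _.
rewrite exchange_big; apply: eq_bigr => s2 st1.
rewrite exchange_big; apply: eq_bigr => t1 _.
rewrite exchange_big; apply: eq_bigr => t2 st2 /=.
under eq_bigr => i _ do rewrite ((deconcatenating1 (sym_ord1 _)).1 _ _ E1)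
  ((IH (sym_slice i sym_x)).1 _ _ E') !ffunE.
rewrite (sum_eq_ffun1 _ (fun G => x (ffcat G _))); apply: sym_perm sym_x _.
rewrite (permPl (perm_codom_ffcat _ _)) (permPr (perm_codom_castf _ _)).
rewrite (permPr (perm_codom_ffcat _ _)).
rewrite (permPl (perm_cat (perm_codom_castf _ _) (perm_codom_castf _ _))).
rewrite (permPl (perm_cat (perm_codom_ffcat _ _) (perm_codom_ffcat _ _))) perm_sym.
exact: perm_codom_shuffle2.
Qed.

Lemma deconcatenatingS : [pchar k] =i pred0 -> deconcatenating (1 + N).
Proof.
move=> char0 x sym_x.
have vanish p q p1 q1 : (p1 + q1 != 1)%N -> slice_coproduct p q p1 q1 x = 0.
  by move=> pq1_neq1; apply: big1 => i _; rewrite (deconcatenating1 (sym_ord1 _)).2 ?dot2_0l.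
have expand p q KK : Delta (1 + N) p q x KK *+ (1 + N) =
    (if (0 < q)%N then slice_coproduct p q 0 1 x KK else 0) +
    (if (0 < p)%N then slice_coproduct p q 1 0 x KK else 0).
  rewrite -ffunMnE DeltaMn_slice // (sum_pairs_deg1 _ _ (vanish p q)) ffunE.
  by congr (_ + _); case: ifP; rewrite ?ffunE.
split => [p q E K1 K2|p q pq_neq].
  apply: (@natmul_inj _ (1 + N)%N char0 isT); rewrite /= [LHS]expand.
  set v := x _; rewrite -[in RHS]E mulrnDr addrC.
  congr (_ + _); case: ifPn => [n_gt0|];
    rewrite ?slice_coproductE ?expn0 ?expn1 ?mul1n ?muln1 // -leqNgt leqn0 => /eqP n0;
    by rewrite -(mulr0n v); congr (_ *+ _).
have off p1 q1 : (p1 + q1)%N = 1%N -> (p1 <= p)%N -> (q1 <= q)%N ->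
    slice_coproduct p q p1 q1 x = 0.
  move=> ? ? ?; apply: big1 => i _; rewrite (IH (sym_slice i sym_x)).2 ?dot2_0r //.
  by apply/eqP; move/eqP: pq_neq; lia.
apply/ffunP => KK; apply: (@natmul_inj _ (1 + N)%N char0 isT).
rewrite /= ffunE mul0rn [LHS]expand -[0 in RHS]addr0.
by congr (_ + _); case: ifPn => // n_gt0; rewrite off ?ffunE.
Qed.

End InductiveStep.

Lemma deconcatenatingP : [pchar k] =i pred0 -> forall N, deconcatenating N.
Proof.
move=> char0; elim=> [|N IH]; first exact: deconcatenating0.
exact: deconcatenatingS IH char0.
Qed.

End Deconcatenation.

(** * The factorwise product with a shuffle product *)

Lemma sum_ffun_perm (V : nmodType) (T : finType) N (s : 'S_N) (F : {ffun 'I_N -> T} -> V) :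
  \sum_(I : {ffun 'I_N -> T}) F I = \sum_(I : {ffun 'I_N -> T}) F [ffun x => I (s x)].
Proof.
apply: (reindex_inj (h := fun I : {ffun 'I_N -> T} => [ffun x => I (s x)])).
move=> I1 I2 /ffunP I12; apply/ffunP => x.
by have := I12 (s^-1 x)%g; rewrite !ffunE permKV.
Qed.

Lemma sum_ffun_pair (V : nmodType) (T : finType) p q
    (F : {ffun 'I_p -> T} * {ffun 'I_q -> T} -> V) :
  \sum_KK F KK =
  \sum_(I : {ffun 'I_(p + q) -> T}) F ([ffun j => I (lshift q j)], [ffun j => I (rshift p j)]).
Proof.
rewrite (reindex (fun I : {ffun 'I_(p + q) -> T} =>
                   ([ffun j => I (lshift q j)], [ffun j => I (rshift p j)]))) //.
exists (fun KK => ffcat KK.1 KK.2) => [I _|[K1 K2] _]; first exact: ffcat_split.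
by congr (_, _); apply/ffunP => j; rewrite ffunE ?ffcat_lshift ?ffcat_rshift.
Qed.

Lemma mulr_sum2r (R : pzSemiRingType) (S T : finType) (P : S -> T -> bool) (g : S -> T -> R) x :
  x * (\sum_s \sum_(t | P s t) g s t) = \sum_s \sum_(t | P s t) x * g s t.
Proof. by rewrite big_distrr; apply: eq_bigr => s _; rewrite big_distrr. Qed.

Lemma mulr_sum2l (R : pzSemiRingType) (S T : finType) (P : S -> T -> bool) (g : S -> T -> R) y :
  (\sum_s \sum_(t | P s t) g s t) * y = \sum_s \sum_(t | P s t) g s t * y.
Proof. by rewrite big_distrl; apply: eq_bigr => s _; rewrite big_distrl. Qed.

Lemma exchange_big_dep2 (V : nmodType) (A S T : finType) (P : S -> T -> bool)
    (F : A -> S -> T -> V) :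
  \sum_x \sum_s \sum_(t | P s t) F x s t = \sum_s \sum_(t | P s t) \sum_x F x s t.
Proof. by rewrite exchange_big; apply: eq_bigr => s _; rewrite exchange_big. Qed.

Section StarDot.
Variables (k : fieldType) (r : nat -> nat)
  (c : forall d d', 'I_(r d) -> 'I_(r d') -> 'I_(r (d + d')%N) -> k) (d e : nat).

Lemma star_tdeltaE n (K : {ffun 'I_n -> 'I_(r e)}) (b : tens k r d n) L :
  star c (tdelta k K) b L = \sum_(J : {ffun 'I_n -> 'I_(r d)}) b J * \prod_(j < n) c (K j) (J j) (L j).
Proof.
rewrite ffunE (bigD1 K) //= [X in _ + X]big1 => [|I neq_IK]; last first.
  by apply: big1 => J _; rewrite ffunE (negbTE neq_IK) !mul0r.
by rewrite addr0; apply: eq_bigr => J _; rewrite ffunE eqxx mul1r.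
Qed.

Variables (m n : nat) (a : tens k r e (m + n)) (b : tens k r d m) (f : tens k r d n).
Hypothesis sym_a : sym a.

Lemma shuffle_term_reindex L (s : {ffun 'I_m -> 'I_(m + n)}) (t : {ffun 'I_n -> 'I_(m + n)}) :
  shuffle s t ->
  \sum_(I : {ffun 'I_(m + n) -> 'I_(r e)}) \sum_(J : {ffun 'I_(m + n) -> 'I_(r d)})
    a I * (b [ffun j => J (s j)] * f [ffun j => J (t j)]) *
    \prod_(x < m + n) c (I x) (J x) (L x) =
  \sum_(I : {ffun 'I_(m + n) -> 'I_(r e)}) \sum_(J : {ffun 'I_(m + n) -> 'I_(r d)}) a I *
    ((b [ffun j => J (lshift n j)] * \prod_(j < m) c (I (lshift n j)) (J (lshift n j)) (L (s j))) *
     (f [ffun j => J (rshift m j)] * \prod_(j < n) c (I (rshift m j)) (J (rshift m j)) (L (t j)))).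
Proof.
move=> st; pose sg : 'S_(m + n) := perm (ffcat_shuffle_inj st).
have sg_l j : sg (lshift n j) = s j by rewrite permE ffcat_lshift.
have sg_r j : sg (rshift m j) = t j by rewrite permE ffcat_rshift.
rewrite (sum_ffun_perm sg^-1); apply: eq_bigr => I _.
rewrite (sum_ffun_perm sg^-1); apply: eq_bigr => J _.
rewrite sym_a (reindex_inj (@perm_inj _ sg)) big_split_ord /= -mulrA; congr (_ * _).
have -> : [ffun j => [ffun x => J (sg^-1 x)%g] (s j)] = [ffun j => J (lshift n j)].
  by apply/ffunP => j; rewrite !ffunE -sg_l permK.
have -> : [ffun j => [ffun x => J (sg^-1 x)%g] (t j)] = [ffun j => J (rshift m j)].
  by apply/ffunP => j; rewrite !ffunE -sg_r permK.
rewrite mulrACA; congr (_ * _ * (_ * _)); apply: eq_bigr => i _.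
  by rewrite !ffunE permK sg_l.
by rewrite !ffunE permK sg_r.
Qed.

Lemma star_dot_deconcat (X : tens2 k r e m n) :
  (forall K1 K2, X (K1, K2) = a (ffcat K1 K2)) -> star c a (dot b f) = mu c b f X.
Proof.
move=> XE; apply/ffunP => L; rewrite !ffunE.
under eq_bigr => I _ do under eq_bigr => J _ do rewrite ffunE mulr_sum2r mulr_sum2l.
under [RHS]eq_bigr => IJ _ do rewrite ffunE mulr_sum2r.
under eq_bigr => I _ do rewrite exchange_big_dep2.
rewrite [LHS]exchange_big_dep2 [RHS]exchange_big_dep2; apply: eq_bigr => s _; apply: eq_bigr => t st.
rewrite shuffle_term_reindex // sum_ffun_pair; apply: eq_bigr => I _.
rewrite XE ffcat_split !star_tdeltaE big_distrl big_distrr /=.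
under [RHS]eq_bigr => J1 _ do rewrite big_distrr big_distrr /=.
rewrite [RHS]pair_big [RHS]sum_ffun_pair; apply: eq_bigr => J _ /=.
by congr (_ * (_ * _ * (_ * _))); apply: eq_bigr => j _; rewrite !ffunE.
Qed.

End StarDot.

Theorem lemma3p5 (k : fieldType) (B : comAlgType k) (r : nat -> nat)
  (bas : forall d : nat, 'I_(r d) -> B)
  (c : forall d d', 'I_(r d) -> 'I_(r d') -> 'I_(r (d + d')%N) -> k) :
  [pchar k] =i pred0 ->
  graded_algebra_gen_B1 bas c ->
  forall (d e n m : nat) (Delta : forall N p q : nat, tens k r e N -> tens2 k r e p q),
  is_Delta Delta ->
  forall (f : tens k r d n) (b : tens k r d m) (a : tens k r e (m + n)),
  sym f -> sym b -> sym a ->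
  star c a (dot b f) = mu c b f (Delta (m + n)%N m n a).
Proof.
move=> char0 _ d e n m Delta DeltaP f b a _ _ sym_a.
apply: star_dot_deconcat => // K1 K2.
by rewrite ((deconcatenatingP DeltaP char0 sym_a).1 _ _ erefl) castf_id.
Qed.
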